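(* Let $F,F'$ be topological hyperfields, $F''$ a hyperfield, and $f:F\to F''$, $f':F'\to F''$ hyperfield morphisms. Let $*\in\{s,w\}$ and $M\in\operatorname{Gr}^*(r,F''^n)$. Suppose $H:F_0\times[0,1]\to F'_0$ is a hyperfield homotopy with $f'(H(x,t))=f(x)$ for all $x\in F$ and $t\in[0,1]$. Then $([\varphi],t)\mapsto[H_t\circ\varphi]$ defines a continuous map (homotopy) $$\operatorname{Real}^*_F(M)\times[0,1]\to\operatorname{Real}^*_{F'}(M).$$
   Context: Hyperfields. A hyperfield $(F,\odot,\boxplus,1,0)$ has the following data and axioms. - $\odot$ is a commutative multiplication and $\boxplus$ is a hyperaddition assigning to each $x,y$ a nonempty subset $x\boxplus y\subseteq F$ (extended to subsets by unions). - $\boxplus$ is commutative and associative, and $x\boxplus 0=\{x\}$. - Each $x$ has a unique $-x$ with $0\in x\boxplus(-x)$, and $x\in y\boxplus z \iff z\in x\boxplus(-y)$. - $(F\setminus\{0\},\odot,1)$ is an abelian group $F^\times$, $0\odot x=0$, and $x\odot(y\boxplus z)=(x\odot y)\boxplus(x\odot z)$. A homomorphism (morphism) $h$ satisfies $h(0)=0$, $h(1)=1$, $h(xy)=h(x)h(y)$ and $h(x\boxplus y)\subseteq h(x)\boxplus h(y)$. Topological hyperfields. A topological hyperfield is a hyperfield with a topology $T$ in which $F\setminus\{0\}$ is open, multiplication is continuous, and inversion on $F^\times$ is continuous. $F_0$ is $F$ with the 0-coarse topology, whose open sets are $F$ and all $U\in T$ with $0\notin U$. A hyperfield homotopy is a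 continuous $H:F\times[0,1]\to F'$ with each $H_t=H(\cdot,t)$ a hyperfield homomorphism. Grassmannians. A strong Grassmann–Plücker (GP) function of rank $r$ on $E=\{1,\dots,n\}$ is a function $\varphi:E^r\to F$ with the following properties. - $\varphi$ is not identically $0$. - $\varphi$ is alternating. - For all $(i_1,\dots,i_{r+1})\in E^{r+1}$ and $(j_1,\dots,j_{r-1})\in E^{r-1}$: $$0\in\boxplus_{k=1}^{r+1}(-1)^k\varphi(i_1,\dots,\widehat{i_k},\dots,i_{r+1})\odot\varphi(i_k,j_1,\dots,j_{r-1}).$$ A weak GP function is a function $\varphi:E^r\to F$ with the following properties. - $\varphi$ is nonzero and alternating. - Its support is the set of bases of a matroid. - The relation holds whenever $|\{i\}\setminus\{j\}|=3$. $\operatorname{Gr}^s(r,F^n)$ and $\operatorname{Gr}^w(r,F^n)$ are the sets of classes of strong, resp. weak, GP functions modulo $\varphi\sim\alpha\varphi$, $\alpha\in F^\times$. For topological $F$ they have the subspace topology of $(F^{E^r}\setminus\{0\})/F^\times$, which carries the product and quotient topologies. Realization spaces. A morphism $f$ induces $\operatorname{Gr}^*(f):[\varphi]\mapsto[f\circ\varphi]$. For $M\in\operatorname{Gr}^*(r,F''^n)$, the realization space $\operatorname{Real}^*_F(M)=\operatorname{Gr}^*(f)^{-1}(M)\subseteq\operatorname{Gr}^*(r,F^n)$ has the subspace topology, computed with the given topology of $F$. *)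

From Stdlib Require Import Reals.
From mathcomp Require Import all_boot all_fingroup.

Set Implicit Arguments.
Unset Strict Implicit.
Unset Printing Implicit Defensive.

Definition topology (X : Type) := (X -> Prop) -> Prop.

Definition is_topology (X : Type) (T : topology X) : Prop :=
  T (fun _ => True) /\ T (fun _ => False) /\
  (forall (I : Type) (U : I -> X -> Prop),
      (forall i, T (U i)) -> T (fun x => exists i, U i x)) /\
  (forall U V, T U -> T V -> T (fun x => U x /\ V x)).

Definition continuous (X Y : Type) (TX : topology X) (TY : topology Y)
  (g : X -> Y) : Prop :=
  forall V, TY V -> TX (fun x => V (g x)).

Definition prod_top (X Y : Type) (TX : topology X) (TY : topology Y)
  : topology (X * Y) :=
  fun W => forall p, W p ->
    exists U V, TX U /\ TY V /\ U p.1 /\ V p.2 /\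
      forall q, U q.1 -> V q.2 -> W q.

Definition sub_top (X : Type) (P : X -> Prop) (TX : topology X)
  : topology {x | P x} :=
  fun V => exists U, TX U /\ forall x, V x <-> U (proj1_sig x).

Definition fun_top (A : finType) (X : Type) (TX : topology X)
  : topology (A -> X) :=
  fun W => forall phi, W phi ->
    exists U : A -> X -> Prop,
      (forall a, TX (U a)) /\ (forall a, U a (phi a)) /\
      forall psi, (forall a, U a (psi a)) -> W psi.

Definition quot_top (X Y : Type) (TX : topology X) (q : X -> Y)
  : topology Y :=
  fun V => TX (fun x => V (q x)).

Definition I01 := {t : R | Rle 0 t /\ Rle t 1}.

Definition R_top : topology R :=
  fun U => forall x, U x -> exists eps, Rlt 0 eps /\
    forall y, Rlt (Rabs (Rminus y x)) eps -> U y.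

Definition I01_top : topology I01 :=
  @sub_top R (fun t => Rle 0 t /\ Rle t 1) R_top.

(* hadd x y z  means  z \in x [+] y                                    *)

Record hyperfield := Hyperfield {
  hcar :> Type;
  hzero : hcar;
  hone : hcar;
  hmul : hcar -> hcar -> hcar;
  hadd : hcar -> hcar -> hcar -> Prop;
  hneg : hcar -> hcar;
  hinv : hcar -> hcar;
  hmulC : forall x y, hmul x y = hmul y x;
  hmulA : forall x y z, hmul x (hmul y z) = hmul (hmul x y) z;
  hmul1 : forall x, hmul hone x = x;
  hone_neq0 : hone <> hzero;
  hmul_neq0 : forall x y, x <> hzero -> y <> hzero -> hmul x y <> hzero;
  hmulV : forall x, x <> hzero -> hmul x (hinv x) = hone;
  hmul0 : forall x, hmul hzero x = hzero;
  hadd_nonempty : forall x y, exists z, hadd x y z;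
  haddC : forall x y z, hadd x y z <-> hadd y x z;
  haddA : forall x y z w,
    (exists u, hadd x y u /\ hadd u z w) <-> (exists u, hadd y z u /\ hadd x u w);
  hadd0 : forall x z, hadd x hzero z <-> z = x;
  hnegP : forall x, hadd x (hneg x) hzero;
  hneg_uniq : forall x y, hadd x y hzero -> y = hneg x;
  hrev : forall x y z, hadd y z x <-> hadd x (hneg y) z;
  hdistr : forall x y z w,
    (exists u, hadd y z u /\ w = hmul x u) <-> hadd (hmul x y) (hmul x z) w
}.

Definition hmorphism (F F' : hyperfield) (h : F -> F') : Prop :=
  h (hzero F) = hzero F' /\ h (hone F) = hone F' /\
  (forall x y, h (hmul x y) = hmul (h x) (h y)) /\
  (forall x y z, hadd x y z -> hadd (h x) (h y) (h z)).

Definition is_top_hyperfield (F : hyperfield) (T : topology F) : Prop :=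
  is_topology T /\
  T (fun x => x <> hzero F) /\
  continuous (prod_top T T) T (fun p : F * F => hmul p.1 p.2) /\
  continuous (@sub_top F (fun x => x <> hzero F) T) T
             (fun x => hinv (proj1_sig x)).

Definition coarse0 (F : hyperfield) (T : topology F) : topology F :=
  fun U => (forall x, U x) \/ (T U /\ ~ U (hzero F)).

Fixpoint hsum (F : hyperfield) (l : seq F) : F -> Prop :=
  match l with
  | [::] => fun w => w = hzero F
  | a :: l' => fun w => exists u, hsum l' u /\ hadd a u w
  end.

Definition hsign (F : hyperfield) (b : bool) : F :=
  if b then hneg (hone F) else hone F.

(* Grassmann-Pluecker functions; E = 'I_n, E^r = r.-tuple 'I_n         *)

(* evaluate phi on a sequence (0 if the length is not r) *)
Definition tapp (F : hyperfield) (n r : nat) (phi : r.-tuple 'I_n -> F)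
  (s : seq 'I_n) : F :=
  match (insub s : option (r.-tuple 'I_n)) with
  | Some t => phi t
  | None => hzero F
  end.

Definition not_zero (F : hyperfield) (n r : nat) (phi : r.-tuple 'I_n -> F) :=
  exists t, phi t <> hzero F.

Definition alternating (F : hyperfield) (n r : nat) (phi : r.-tuple 'I_n -> F) :=
  (forall t : r.-tuple 'I_n, ~~ uniq t -> phi t = hzero F) /\
  (forall (t : r.-tuple 'I_n) (s : 'S_r),
      phi [tuple tnth t (s i) | i < r] = hmul (hsign F (odd_perm s)) (phi t)).

(* 0 \in [+]_{k=1}^{r+1} (-1)^k phi(i_1..^i_k..i_{r+1}) phi(i_k,j_1..j_{r-1});
   k below is 0-based, so (-1)^(k+1) *)
Definition gp_relation (F : hyperfield) (n r : nat) (phi : r.-tuple 'I_n -> F)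
  (i : r.+1.-tuple 'I_n) (j : r.-1.-tuple 'I_n) : Prop :=
  hsum [seq hmul (hsign F (~~ odd k))
              (hmul (phi [tuple tnth i (lift k l) | l < r])
                    (tapp phi (tnth i k :: (j : seq 'I_n))))
       | k : 'I_(r.+1) <- enum 'I_(r.+1)] (hzero F).

Definition matroid_bases (n : nat) (B : {set 'I_n} -> Prop) : Prop :=
  (exists B0, B B0) /\
  forall B1 B2 x, B B1 -> B B2 -> x \in B1 :\: B2 ->
    exists2 y, y \in B2 :\: B1 & B (y |: (B1 :\ x)).

Definition support (F : hyperfield) (n r : nat) (phi : r.-tuple 'I_n -> F)
  : {set 'I_n} -> Prop :=
  fun B => exists t, phi t <> hzero F /\ B = [set x | x \in t].

Inductive gp_kind := Strong | Weak.

Definition GP (k : gp_kind) (F : hyperfield) (n r : nat)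
  (phi : r.-tuple 'I_n -> F) : Prop :=
  match k with
  | Strong => not_zero phi /\ alternating phi /\
              forall i j, gp_relation phi i j
  | Weak => not_zero phi /\ alternating phi /\ matroid_bases (support phi) /\
            forall (i : r.+1.-tuple 'I_n) (j : r.-1.-tuple 'I_n),
              #|[set x | x \in i] :\: [set x | x \in j]| = 3 ->
              gp_relation phi i j
  end.

Definition nzfun (F : hyperfield) (n r : nat) :=
  {phi : r.-tuple 'I_n -> F | not_zero phi}.

Definition nzfun_top (F : hyperfield) (T : topology F) (n r : nat)
  : topology (nzfun F n r) :=
  @sub_top _ (@not_zero F n r) (@fun_top (r.-tuple 'I_n) F T).

Definition cls (F : hyperfield) (n r : nat) (phi : r.-tuple 'I_n -> F)
  : (r.-tuple 'I_n -> F) -> Prop :=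
  fun psi => exists2 a, a <> hzero F & psi = (fun x => hmul a (phi x)).

Definition projspace (F : hyperfield) (n r : nat) :=
  {S : (r.-tuple 'I_n -> F) -> Prop |
     exists phi : nzfun F n r, S = cls (proj1_sig phi)}.

Definition qmap (F : hyperfield) (n r : nat) (phi : nzfun F n r)
  : projspace F n r :=
  exist _ (cls (proj1_sig phi)) (ex_intro _ phi erefl).

Definition proj_top (F : hyperfield) (T : topology F) (n r : nat)
  : topology (projspace F n r) :=
  @quot_top _ _ (@nzfun_top F T n r) (@qmap F n r).

Definition Gr (k : gp_kind) (F : hyperfield) (n r : nat) :=
  {c : projspace F n r | exists phi, GP k phi /\ proj1_sig c = cls phi}.

Definition Gr_top (k : gp_kind) (F : hyperfield) (T : topology F) (n r : nat)
  : topology (Gr k F n r) :=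
  sub_top (@proj_top F T n r).

(* Real_F(M) = Gr(f)^{-1}(M), with Gr(f)[phi] = [f o phi] *)
Definition Real (k : gp_kind) (F F'' : hyperfield) (f : F -> F'') (n r : nat)
  (M : Gr k F'' n r) :=
  {c : Gr k F n r | exists phi, proj1_sig (proj1_sig c) = cls phi /\
      proj1_sig (proj1_sig M) = cls (fun x => f (phi x))}.

Definition Real_top (k : gp_kind) (F F'' : hyperfield) (T : topology F)
  (f : F -> F'') (n r : nat) (M : Gr k F'' n r) : topology (Real f M) :=
  sub_top (@Gr_top k F T n r).

From Pilot Require Import Defs.
From Stdlib Require Import Reals.
From mathcomp Require Import all_boot all_fingroup.
From Stdlib Require Import Classical FunctionalExtensionality PropExtensionality.
From Stdlib Require Import ProofIrrelevance IndefiniteDescription.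

Set Implicit Arguments.
Unset Strict Implicit.
Unset Printing Implicit Defensive.

(* Each [H_t] is a morphism with [f' o H_t = f], so it maps GP functions to
   GP functions, classes to classes and the fibre over [M] to the fibre over
   [M]: the map [([phi], t) |-> [H_t o phi]] is well defined.  For continuity,
   normalise a representative [phi] at a coordinate [x0] with [phi x0 <> 0];
   the normalised representative varies continuously with [[phi]].  At the
   coordinates where it is nonzero, [H] is continuous for the topology of [F],
   since [F] and [F_0] have the same neighbourhoods of nonzero points.  At the
   other coordinates every point of the realization space vanishes, because
   the zero pattern of a realization is that of [M], and there [H_t] is 0. *)

Section HyperfieldTheory.
Variable F : hyperfield.
Implicit Types a b u x : F.

Lemma hmulr1 x : hmul x (hone F) = x.
Proof. by rewrite hmulC hmul1. Qed.

Lemma hmulr0 x : hmul x (hzero F) = hzero F.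
Proof. by rewrite hmulC hmul0. Qed.

Lemma hmul_eq0 a x : a <> hzero F -> hmul a x = hzero F <-> x = hzero F.
Proof.
move=> a_nz; split=> [ax0 | ->]; last exact: hmulr0.
by apply: NNPP => x_nz; apply: (hmul_neq0 a_nz x_nz).
Qed.

Lemma hinv_neq0 x : x <> hzero F -> hinv x <> hzero F.
Proof. by move=> x_nz ix0; apply: (@hone_neq0 F); rewrite -(hmulV x_nz) ix0 hmulr0. Qed.

Lemma hmulK a u : a <> hzero F -> hmul (hinv a) (hmul a u) = u.
Proof. by move=> a_nz; rewrite hmulA (hmulC _ a) hmulV // hmul1. Qed.

Lemma hinvM a b : a <> hzero F -> b <> hzero F ->
  hinv (hmul a b) = hmul (hinv b) (hinv a).
Proof.
move=> a_nz b_nz; have ab_nz := hmul_neq0 a_nz b_nz.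
by rewrite -[RHS](hmulK _ ab_nz) -hmulA (hmulA b) hmulV // hmul1 hmulV // hmulr1.
Qed.

End HyperfieldTheory.

Section Morphisms.
Variables (F F' : hyperfield) (h : F -> F').
Hypothesis hh : hmorphism h.

Lemma hmorph0 : h (hzero F) = hzero F'.
Proof. by case: hh. Qed.

Lemma hmorphM x y : h (hmul x y) = hmul (h x) (h y).
Proof. by case: hh => _ [_ []]. Qed.

Lemma hmorph_neq0 x : x <> hzero F -> h x <> hzero F'.
Proof.
move=> x_nz hx0; apply: (@hone_neq0 F').
by case: hh => _ [<- _]; rewrite -(hmulV x_nz) hmorphM hx0 hmul0.
Qed.

Lemma hmorph_eq0 x : h x = hzero F' <-> x = hzero F.
Proof.
split=> [hx0 | ->]; last exact: hmorph0.
by apply: NNPP => x_nz; apply: (hmorph_neq0 x_nz).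
Qed.

Lemma hmorphN x : h (hneg x) = hneg (h x).
Proof.
case: hh => _ [_ [_ h_add]]; apply: hneg_uniq; rewrite -hmorph0.
exact/h_add/hnegP.
Qed.

Lemma hmorph_sign b : h (hsign F b) = hsign F' b.
Proof. by case: hh => _ [h1 _]; case: b => /=; rewrite ?hmorphN h1. Qed.

Lemma hmorph_hsum l w : hsum l w -> hsum (map h l) (h w).
Proof.
elim: l w => [|a l IH] w /=; first by move=> ->; exact: hmorph0.
move=> [u [sum_u add_u]]; exists (h u); split; first exact: IH.
by case: hh => _ [_ [_]]; apply.
Qed.

Lemma hmorph_tapp n r (phi : r.-tuple 'I_n -> F) s :
  h (tapp phi s) = tapp (fun x => h (phi x)) s.
Proof. by rewrite /tapp; case: insub => //; exact: hmorph0. Qed.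

Lemma GP_hmorph k n r (phi : r.-tuple 'I_n -> F) :
  GP k phi -> GP k (fun x => h (phi x)).
Proof.
have nz : not_zero phi -> not_zero (fun x => h (phi x)).
  by move=> [t phit_nz]; exists t; apply: hmorph_neq0.
have alt : alternating phi -> alternating (fun x => h (phi x)).
  move=> [alt0 alt_perm]; split=> [t t_dup | t s]; first by rewrite alt0 ?hmorph0.
  by rewrite alt_perm hmorphM hmorph_sign.
have rel i j : gp_relation phi i j -> gp_relation (fun x => h (phi x)) i j.
  move=> /hmorph_hsum; rewrite hmorph0 -map_comp; congr (hsum _ _).
  by apply: eq_map => l /=; rewrite !hmorphM hmorph_sign hmorph_tapp.
have supp : Defs.support (fun x => h (phi x)) = Defs.support phi.
  apply: functional_extensionality => B; apply: propositional_extensionality.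
  split=> -[t [phit_nz ->]]; exists t; split=> //.
    by move=> phit0; apply: phit_nz; rewrite phit0 hmorph0.
  exact: hmorph_neq0.
case: k => /= [[? [? grel]] | [? [? [? wrel]]]].
  by split; [exact: nz | split; [exact: alt | move=> i j; exact/rel/grel]].
split; first exact: nz; split; first exact: alt.
by rewrite supp; split=> // i j ij3; exact/rel/wrel.
Qed.

End Morphisms.

Lemma GP_not_zero k (F : hyperfield) n r (phi : r.-tuple 'I_n -> F) :
  GP k phi -> not_zero phi.
Proof. by case: k => /= -[]. Qed.

Section Classes.
Variables (F : hyperfield) (n r : nat).
Implicit Types phi psi : r.-tuple 'I_n -> F.

Lemma cls_refl phi : cls phi phi.
Proof.
exists (hone F); first exact: hone_neq0.
by apply: functional_extensionality => x; rewrite hmul1.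
Qed.

Lemma cls_eq_scale phi psi :
  cls phi = cls psi -> exists2 b, b <> hzero F & phi = (fun x => hmul b (psi x)).
Proof. by move=> e; have := cls_refl phi; rewrite e. Qed.

Lemma cls_scale psi b : b <> hzero F -> cls (fun x => hmul b (psi x)) = cls psi.
Proof.
move=> b_nz; apply: functional_extensionality => chi.
apply: propositional_extensionality; split=> -[a a_nz ->].
  exists (hmul a b); first exact: hmul_neq0.
  by apply: functional_extensionality => x; rewrite hmulA.
exists (hmul a (hinv b)); first by apply: hmul_neq0 => //; apply: hinv_neq0.
by apply: functional_extensionality => x; rewrite -hmulA hmulK.
Qed.

End Classes.

Lemma cls_hmorph (F F' : hyperfield) (h : F -> F') n r (phi psi : r.-tuple 'I_n -> F) : hmorphism h ->
  cls phi = cls psi -> cls (fun x => h (phi x)) = cls (fun x => h (psi x)).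
Proof.
move=> hh /cls_eq_scale [b b_nz ->].
have -> : (fun x => h (hmul b (psi x))) = (fun x => hmul (h b) (h (psi x))).
  by apply: functional_extensionality => x; exact: hmorphM.
exact/cls_scale/(hmorph_neq0 hh).
Qed.

Section Normalization.
Variables (F : hyperfield) (E : finType).
Implicit Type psi : E -> F.

Definition normalize (x0 : E) psi : E -> F := fun a => hmul (hinv (psi x0)) (psi a).

Definition normalized_in (x0 : E) (A : E -> F -> Prop) psi : Prop :=
  psi x0 <> hzero F /\ forall a, A a (normalize x0 psi a).

Lemma normalize_id (x0 : E) psi : psi x0 <> hzero F -> normalize x0 psi x0 = hone F.
Proof. by move=> psi_nz; rewrite /normalize hmulC hmulV. Qed.

Lemma normalize_eq0 (x0 : E) psi a :
  psi x0 <> hzero F -> normalize x0 psi a = hzero F <-> psi a = hzero F.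
Proof. by move=> psi_nz; apply/hmul_eq0/hinv_neq0. Qed.

Lemma normalize_scale (x0 : E) psi b : b <> hzero F -> psi x0 <> hzero F ->
  normalize x0 (fun x => hmul b (psi x)) = normalize x0 psi.
Proof.
move=> b_nz psi_nz; apply: functional_extensionality => a.
by rewrite /normalize hinvM // -hmulA hmulK.
Qed.

Lemma normalized_in_scale (x0 : E) A psi b : b <> hzero F ->
  normalized_in x0 A psi -> normalized_in x0 A (fun x => hmul b (psi x)).
Proof.
move=> b_nz [psi_nz Apsi]; split; first exact: hmul_neq0.
by rewrite normalize_scale.
Qed.

End Normalization.

Lemma cls_normalize (F : hyperfield) n r (x0 : r.-tuple 'I_n) (psi : r.-tuple 'I_n -> F) :
  psi x0 <> hzero F -> cls (normalize x0 psi) = cls psi.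
Proof. by move=> psi_nz; apply: cls_scale; apply: hinv_neq0. Qed.

Lemma open_ext (X : Type) (T : topology X) (U V : X -> Prop) :
  T U -> (forall x, U x <-> V x) -> T V.
Proof.
move=> TU UV; suff -> : V = U by [].
apply: functional_extensionality => x; apply: propositional_extensionality.
by rewrite UV.
Qed.

Lemma open_bigI (X : Type) (T : topology X) (A : finType) (D : A -> X -> Prop) :
  T (fun _ => True) -> (forall U V, T U -> T V -> T (fun x => U x /\ V x)) ->
  (forall a, T (D a)) -> T (fun x => forall a, D a x).
Proof.
move=> T_setT T_setI TD.
suff /(_ (enum A)) T_enum : forall s : seq A, T (fun x => forall a, a \in s -> D a x).
  by apply: (open_ext T_enum) => x; split=> Dx a; [apply: Dx; rewrite mem_enum|].
elim=> [|a s IH]; first by apply: (open_ext T_setT).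
apply: (open_ext (T_setI _ _ (TD a) IH)) => x; split.
  by move=> [Dax Dsx] b; rewrite in_cons => /orP [/eqP -> | /Dsx].
by move=> Dx; split=> [|b b_s]; apply: Dx; rewrite in_cons ?eqxx ?b_s ?orbT.
Qed.

Lemma I01_open_setT : I01_top (fun _ => True).
Proof.
exists (fun _ => True); split=> // x _.
by exists R1; split=> //; exact: Rlt_0_1.
Qed.

Lemma R_open_setI (U V : R -> Prop) :
  R_top U -> R_top V -> R_top (fun x => U x /\ V x).
Proof.
move=> TU TV x [Ux Vx].
have [e1 [e1_pos U_e1]] := TU x Ux; have [e2 [e2_pos V_e2]] := TV x Vx.
exists (Rmin e1 e2); split; first exact: Rmin_pos.
move=> y xy; split; [apply: U_e1 | apply: V_e2];
  apply: (Rlt_le_trans _ _ _ xy); [exact: Rmin_l | exact: Rmin_r].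
Qed.

Lemma I01_open_bigI (A : finType) (J : A -> I01 -> Prop) :
  (forall a, I01_top (J a)) -> I01_top (fun t => forall a, J a t).
Proof.
apply: open_bigI; first exact: I01_open_setT.
move=> U V [U' [TU' UU']] [V' [TV' VV']].
by exists (fun x => U' x /\ V' x); split; [exact: R_open_setI | move=> x; rewrite UU' VV'].
Qed.

Section DivisionNeighbourhoods.
Variables (F : hyperfield) (TF : topology F).
Hypothesis HF : is_top_hyperfield TF.

Lemma hdiv_nbhs (u0 v0 : F) (U : F -> Prop) :
  TF U -> v0 <> hzero F -> U (hmul (hinv v0) u0) ->
  exists C D, TF C /\ TF D /\ C u0 /\ D v0 /\
    forall u v, v <> hzero F -> C u -> D v -> U (hmul (hinv v) u).
Proof.
move=> TU v0_nz Uq0; have [_ [_ [mul_cont inv_cont]]] := HF.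
have [B [C [TB [TC [Bv0 [Cu0 BC]]]]]] := mul_cont U TU (hinv v0, u0) Uq0.
have [D [TD BD]] := inv_cont B TB.
exists C, D; do 4!split=> //; first exact/(BD (exist _ v0 v0_nz)).
move=> u v v_nz Cu Dv; apply: (BC (hinv v, u)) => //=.
exact/(BD (exist _ v v_nz)).
Qed.

Lemma normalized_in_open (E : finType) (x0 : E) (A : E -> F -> Prop) :
  (forall a, coarse0 TF (A a)) -> fun_top TF (normalized_in x0 A).
Proof.
move=> TA psi [psi_nz Apsi]; have [[T_setT [_ [_ T_setI]]] [T_nz _]] := HF.
have nbhs a : exists CD : (F -> Prop) * (F -> Prop),
    [/\ TF CD.1, TF CD.2, CD.1 (psi a), CD.2 (psi x0) &
        forall u v, v <> hzero F -> CD.1 u -> CD.2 v -> A a (hmul (hinv v) u)].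
  case: (TA a) => [A_all | [TAa _]]; first by exists ((fun _ => True), (fun _ => True)).
  have [C [D [? [? [? [? CD]]]]]] := hdiv_nbhs TAa psi_nz (Apsi a).
  by exists (C, D).
have [CD hCD] := functional_choice _ nbhs.
have TD : TF (fun v => forall a, (CD a).2 v).
  by apply: open_bigI => // a; case: (hCD a).
(* The normalising coordinate must stay nonzero and inside every denominator
   neighbourhood [(CD a).2]. *)
exists (fun b y => (CD b).1 y /\ (b = x0 -> y <> hzero F /\ forall a, (CD a).2 y)).
split; [move=> b | split; [move=> b | move=> phi phiU]].
- have [TC _ _ _ _] := hCD b; have [b_x0 | b_x0] := eqVneq b x0.
    subst b.
    apply: (open_ext (T_setI _ _ TC (T_setI _ _ T_nz TD))) => y.
    by split=> -[Cy ND]; split=> //; apply: ND.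
  apply: (open_ext TC) => y; split=> [Cy | []] //; split=> // bx0.
  by rewrite bx0 eqxx in b_x0.
- have [_ _ Cpsi _ _] := hCD b; split=> // ->.
  by split=> // a; case: (hCD a).
- have [_ /(_ erefl) [phi_nz Dphi]] := phiU x0; split=> // a.
  have [_ _ _ _ CDa] := hCD a; apply: CDa => //; exact: (phiU a).1.
Qed.

End DivisionNeighbourhoods.

Section RealizationSpace.
Variables (k : gp_kind) (F F'' : hyperfield) (f : F -> F'') (n r : nat).
Variable M : Gr k F'' n r.
Hypothesis Hf : hmorphism f.
Implicit Types (c : Real f M) (phi psi : r.-tuple 'I_n -> F).

Definition real_cls c : (r.-tuple 'I_n -> F) -> Prop := proj1_sig (proj1_sig (proj1_sig c)).

Lemma real_cls_GP c : exists phi, GP k phi /\ real_cls c = cls phi.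
Proof. exact: proj2_sig (proj1_sig c). Qed.

Definition real_rep c : r.-tuple 'I_n -> F :=
  proj1_sig (constructive_indefinite_description _ (real_cls_GP c)).

Lemma real_rep_GP c : GP k (real_rep c).
Proof. exact: (proj2_sig (constructive_indefinite_description _ (real_cls_GP c))).1. Qed.

Lemma real_rep_cls c : real_cls c = cls (real_rep c).
Proof. exact: (proj2_sig (constructive_indefinite_description _ (real_cls_GP c))).2. Qed.

Definition real_of phi (gp : GP k phi)
    (fibre : proj1_sig (proj1_sig M) = cls (fun x => f (phi x))) : Real f M :=
  let P := exist _ (cls phi) (ex_intro _ (exist _ phi (GP_not_zero gp)) erefl) in
  exist _ (exist _ P (ex_intro _ phi (conj gp erefl))) (ex_intro _ phi (conj erefl fibre)).

Lemma real_cls_fibre c phi :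
  real_cls c = cls phi -> proj1_sig (proj1_sig M) = cls (fun x => f (phi x)).
Proof.
case: c => c [psi [c_psi M_psi]] /= c_phi; rewrite M_psi.
by apply: cls_hmorph => //; rewrite -c_psi.
Qed.

Lemma real_cls_zero c1 c2 psi1 psi2 a :
  real_cls c1 = cls psi1 -> real_cls c2 = cls psi2 ->
  psi1 a = hzero F -> psi2 a = hzero F.
Proof.
move=> /real_cls_fibre M1 /real_cls_fibre M2 psi1a.
have [b b_nz fpsi] := cls_eq_scale (etrans (esym M2) M1).
apply/(hmorph_eq0 Hf); rewrite (congr1 (fun g => g a) fpsi) /=.
by rewrite psi1a (hmorph0 Hf) hmulr0.
Qed.

Lemma Real_top_open (TF : topology F) (V : Real f M -> Prop) :
  @Real_top k F F'' TF f n r M V -> exists U, fun_top TF U /\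
    forall c (psi : nzfun F n r), real_cls c = cls (proj1_sig psi) -> V c <-> U (proj1_sig psi).
Proof.
move=> [V1 [[V2 [[U [TU UV2]] V2V1]] V1V]]; exists U; split=> // c psi c_psi.
rewrite V1V V2V1 -UV2; suff -> : proj1_sig (proj1_sig c) = qmap psi by [].
move: c_psi; rewrite /real_cls; case: (proj1_sig (proj1_sig c)) => S S_cls /= S_psi.
by subst S; congr exist; apply: proof_irrelevance.
Qed.

Lemma Real_top_scale_invariant (TF : topology F) (O : (r.-tuple 'I_n -> F) -> Prop) :
  fun_top TF O -> (forall psi b, b <> hzero F -> O psi -> O (fun x => hmul b (psi x))) ->
  @Real_top k F F'' TF f n r M (fun c => exists psi, real_cls c = cls psi /\ O psi).
Proof.
move=> TO O_scale.
pose S (s : projspace F n r) := exists psi, proj1_sig s = cls psi /\ O psi.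
exists (fun g : Gr k F n r => S (proj1_sig g)); split; last by split.
exists S; split; last by split.
exists O; split=> // phi; split=> [[psi [phi_psi Opsi]] | Ophi]; last by exists (proj1_sig phi).
by have [b b_nz ->] := cls_eq_scale phi_psi; exact: O_scale.
Qed.

End RealizationSpace.

Section HomotopyContinuity.
Variables (F F' : hyperfield) (TF : topology F) (TF' : topology F').
Hypothesis HF' : is_top_hyperfield TF'.
Variable H : F * I01 -> F'.
Hypothesis Hcont : continuous (prod_top (coarse0 TF) I01_top) (coarse0 TF') H.
Hypothesis Hhom : forall t : I01, hmorphism (fun x => H (x, t)).

(* Removing [0] from a neighbourhood of a nonzero value makes it [F'_0]-open. *)
Lemma homotopy_nbhs (x0 : F) (t0 : I01) (U : F' -> Prop) :
  TF' U -> x0 <> hzero F -> U (H (x0, t0)) ->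
  exists A J, coarse0 TF A /\ I01_top J /\ A x0 /\ J t0 /\
    forall y t, A y -> J t -> U (H (y, t)).
Proof.
move=> TU x0_nz UH0; have [[_ [_ [_ T_setI]]] [T_nz _]] := HF'.
pose W z := U z /\ z <> hzero F'.
have TW : coarse0 TF' W by right; split; [exact: T_setI | case].
have W_H0 : W (H (x0, t0)) by split=> //; exact: (hmorph_neq0 (Hhom t0)).
have [A [J [TA [TJ [Ax0 [Jt0 AJ]]]]]] := Hcont TW W_H0.
by exists A, J; do 4!split=> //; move=> y t Ay Jt; case: (AJ (y, t)).
Qed.

Lemma homotopy_box (E : finType) (p0 : E -> F) (t0 : I01) (Ub : E -> F' -> Prop) :
  (forall a, TF' (Ub a)) -> (forall a, Ub a (H (p0 a, t0))) ->
  exists A J, (forall a, coarse0 TF (A a)) /\ I01_top J /\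
    (forall a, A a (p0 a)) /\ J t0 /\
    forall p t, (forall a, A a (p a)) -> J t ->
      (forall a, p0 a = hzero F -> p a = hzero F) -> forall a, Ub a (H (p a, t)).
Proof.
move=> TUb Ub_p0.
have nbhs a : exists AJ : (F -> Prop) * (I01 -> Prop),
    [/\ coarse0 TF AJ.1, I01_top AJ.2, AJ.1 (p0 a), AJ.2 t0 &
        p0 a <> hzero F -> forall y t, AJ.1 y -> AJ.2 t -> Ub a (H (y, t))].
  have [p0a0 | p0a_nz] := classic (p0 a = hzero F).
    exists ((fun _ => True), (fun _ => True)); split=> //; first by left.
    exact: I01_open_setT.
  have [A [J [? [? [? [? AJ]]]]]] := homotopy_nbhs (TUb a) p0a_nz (Ub_p0 a).
  by exists (A, J).
have [AJ hAJ] := functional_choice _ nbhs.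
exists (fun a => (AJ a).1), (fun t => forall a, (AJ a).2 t).
split; first by move=> a; case: (hAJ a).
split; first by apply: I01_open_bigI => a; case: (hAJ a).
split; first by move=> a; case: (hAJ a).
split; first by move=> a; case: (hAJ a).
move=> p t Ap Jt p_zero a; have [_ _ _ _ AJa] := hAJ a.
have [p0a0 | p0a_nz] := classic (p0 a = hzero F); last exact: AJa.
have H0 s : H (hzero F, s) = hzero F' := hmorph0 (Hhom s).
by move: (Ub_p0 a); rewrite p_zero // p0a0 !H0.
Qed.

End HomotopyContinuity.

Section RealizationHomotopy.
Variables (F F' F'' : hyperfield) (TF : topology F) (TF' : topology F').
Hypotheses (HF : is_top_hyperfield TF) (HF' : is_top_hyperfield TF').
Variables (f : F -> F'') (f' : F' -> F'').
Hypothesis Hf : hmorphism f.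
Variables (k : gp_kind) (n r : nat) (M : Gr k F'' n r).
Variable H : F * I01 -> F'.
Hypothesis Hcont : continuous (prod_top (coarse0 TF) I01_top) (coarse0 TF') H.
Hypothesis Hhom : forall t : I01, hmorphism (fun x => H (x, t)).
Hypothesis Hcompat : forall (x : F) (t : I01), f' (H (x, t)) = f x.

Lemma homotopy_fibre (c : Real f M) (t : I01) :
  proj1_sig (proj1_sig M) = cls (fun x => f' (H (real_rep c x, t))).
Proof.
rewrite (real_cls_fibre Hf (real_rep_cls c)); congr cls.
by apply: functional_extensionality => x; rewrite Hcompat.
Qed.

Definition homotopy_map (p : Real f M * I01) : Real f' M :=
  real_of (GP_hmorph (Hhom p.2) (real_rep_GP p.1)) (homotopy_fibre p.1 p.2).

Lemma homotopy_map_cls (c : Real f M) (t : I01) (phi : r.-tuple 'I_n -> F) :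
  real_cls c = cls phi -> real_cls (homotopy_map (c, t)) = cls (fun x => H (phi x, t)).
Proof. by move=> c_phi; apply: (cls_hmorph (Hhom t)); rewrite -real_rep_cls. Qed.

Lemma homotopy_map_continuous :
  continuous (prod_top (@Real_top k F F'' TF f n r M) I01_top)
             (@Real_top k F' F'' TF' f' n r M) homotopy_map.
Proof.
move=> V /Real_top_open [U [TU UV]] [c0 t0] /= V_c0t0.
pose phi0 := real_rep c0; have c0_phi0 : real_cls c0 = cls phi0 := real_rep_cls c0.
have [x0 phi0_nz] := GP_not_zero (real_rep_GP c0).
pose p0 := normalize x0 phi0.
have Hp0_nz : not_zero (fun a => H (p0 a, t0)).
  by exists x0; apply: (hmorph_neq0 (Hhom t0)); rewrite /p0 normalize_id //; exact: hone_neq0.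
have /TU [Ub [TUb [Ub_p0 UbU]]] : U (fun a => H (p0 a, t0)).
  apply: (proj1 (UV _ (exist _ _ Hp0_nz) _) V_c0t0).
  by apply: homotopy_map_cls; rewrite /p0 cls_normalize.
have [A [J [TA [TJ [A_p0 [Jt0 AJ]]]]]] := homotopy_box HF' Hcont Hhom TUb Ub_p0.
exists (fun c => exists psi, real_cls c = cls psi /\ normalized_in x0 A psi), J.
split; first by apply: Real_top_scale_invariant; [exact: normalized_in_open | exact: normalized_in_scale].
split=> //; split; first by exists phi0.
split=> //.
move=> [c t] /= [psi [c_psi [psi_nz A_psi]]] Jt.
have Hpsi_nz : not_zero (fun a => H (normalize x0 psi a, t)).
  by exists x0; apply: (hmorph_neq0 (Hhom t)); rewrite normalize_id //; exact: hone_neq0.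
apply: (proj2 (UV _ (exist _ _ Hpsi_nz) _)).
  by apply: homotopy_map_cls; rewrite cls_normalize.
apply: UbU; apply: AJ => // a /(normalize_eq0 _ phi0_nz) phi0a.
exact/(normalize_eq0 _ psi_nz)/(real_cls_zero Hf c0_phi0 c_psi).
Qed.

End RealizationHomotopy.

Theorem theorem5p3 (F F' F'' : hyperfield)
  (TF : topology F) (TF' : topology F')
  (HF : is_top_hyperfield TF) (HF' : is_top_hyperfield TF')
  (f : F -> F'') (f' : F' -> F'')
  (Hf : hmorphism f) (Hf' : hmorphism f')
  (k : gp_kind) (n r : nat) (M : Gr k F'' n r)
  (H : F * I01 -> F')
  (Hcont : continuous (prod_top (coarse0 TF) I01_top) (coarse0 TF') H)
  (Hhom : forall t : I01, hmorphism (fun x => H (x, t)))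
  (Hcompat : forall (x : F) (t : I01), f' (H (x, t)) = f x) :
  exists G : Real f M * I01 -> Real f' M,
    continuous (prod_top (@Real_top k F F'' TF f n r M) I01_top) (@Real_top k F' F'' TF' f' n r M) G /\
    forall (c : Real f M) (t : I01) (phi : r.-tuple 'I_n -> F),
      proj1_sig (proj1_sig (proj1_sig c)) = cls phi ->
      proj1_sig (proj1_sig (proj1_sig (G (c, t)))) = cls (fun x => H (phi x, t)).
Proof.
exists (homotopy_map Hf Hhom Hcompat); split.
  exact: homotopy_map_continuous.
exact: homotopy_map_cls.
Qed.
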